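(* Let $d\ge 1$ and $p\ge 2$ be integers, let $s\ge p$ be an integer, and let $L,M>0$. Let $f:\mathbb{R}^d\to\mathbb{R}$ be a convex function with a minimizer $x^*$. Let $y_c=[v_c;x_c;t_c]\in\mathbb{R}^{2d+1}$ with $t_c\ge 1$, and set $R=1/t_c$. Suppose that on the closed ball $B(x_c,R)=\{x\in\mathbb{R}^d:\|x-x_c\|\le R\}$ the function $f$ is $(s+1)$-times continuously differentiable and satisfies (i) $\|\nabla^{(i)} f(x)\|\le \big[L\,(f(x)-f(x^* ))\big]^{\frac{p-i}{p}}$ for all $x\in B(x_c,R)$ and all $i\in\{1,\dots,p-1\}$, and (ii) $\|\nabla^{(i)} f(x)\|\le M$ for all $x\in B(x_c,R)$ and all $i\in\{p,\dots,s+1\}$. Then for every $y=[v;x;t]\in U_{R,0.2}(y_c)$ and every $i\in\{1,\dots,p\}$, $$\|\nabla^{(i)} f(x)\|\le p\,(M+L+1)\,\frac{\mathcal{E}(y_c)+1}{t_c^{\,p-i}}.$$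
   Context: Norms of derivative tensors $\nabla^{(i)}f(x)$ are operator norms (viewing $\nabla^{(i)}f(x)$ as a multilinear map on $(\mathbb{R}^d)^i$). Points of $\mathbb{R}^{2d+1}$ are written $y=[v;x;t]$ with $v,x\in\mathbb{R}^d$, $t\in\mathbb{R}$. The set $U_{R,0.2}(y_c)=\{[v;x;t]:\|v-v_c\|\le R,\ \|x-x_c\|\le R,\ |t-t_c|\le 0.2\}$. The Lyapunov function is $\mathcal{E}([v;x;t])=\frac{t^2}{4p^2}\|v\|^2+\big\|x+\frac{t}{2p}v-x^*\big\|^2+t^p\,(f(x)-f(x^* ))$. *)

From HB Require Import structures.
From mathcomp Require Import all_boot all_order all_algebra.
From mathcomp Require Import all_classical all_reals all_analysis.
Set Implicit Arguments. Unset Strict Implicit. Unset Printing Implicit Defensive.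
Import Order.TTheory GRing.Theory Num.Theory.
Import numFieldNormedType.Exports.
Local Open Scope classical_set_scope.
Local Open Scope ring_scope.

Section Defs.
Variables (R : realType) (d : nat).
Notation V := 'rV[R]_d.

Definition edot (x y : V) : R := \sum_(i < d) x 0 i * y 0 i.
Definition enorm (x : V) : R := Num.sqrt (edot x x).

Definition cball_e (c : V) (r : R) : set V := [set x | enorm (x - c) <= r].

Definition convex_fun (f : V -> R) : Prop :=
  forall (x y : V) (l : R), 0 <= l <= 1 ->
    f (l *: x + (1 - l) *: y) <= l * f x + (1 - l) * f y.

(* iterated directional derivative: dirD [:: h1; ...; hk] f x
   = D_{h1} D_{h2} ... D_{hk} f (x) = nabla^(k) f(x)[h1,...,hk] for C^k f *)
Fixpoint dirD (hs : seq V) (f : V -> R) : V -> R :=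
  match hs with
  | [::] => f
  | h :: hs' => fun x => derive (dirD hs' f) x h
  end.

Definition ebasis (j : 'I_d) : V := delta_mx 0 j.

Definition Ck_on (k : nat) (f : V -> R) (U : set V) : Prop :=
  open U /\
  (forall (js : seq 'I_d), (size js < k)%N -> forall (j : 'I_d) (x : V), U x ->
      derivable (dirD (map ebasis js) f) x (ebasis j)) /\
  (forall (js : seq 'I_d), (size js <= k)%N -> forall x : V, U x ->
      (dirD (map ebasis js) f) @ x --> (dirD (map ebasis js) f) x).

(* operator norm of the i-th derivative tensor nabla^(i) f(x), viewed as a
   multilinear map on (R^d)^i with Euclidean norms *)
Definition dnorm (i : nat) (f : V -> R) (x : V) : R :=
  sup [set r | exists hs : seq V, [/\ size hs = i,
        all (fun h => enorm h <= 1) hs & r = `|dirD hs f x|]].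

Definition Uset (r : R) (vc xc : V) (tc : R) (v x : V) (t : R) : Prop :=
  enorm (v - vc) <= r /\ enorm (x - xc) <= r /\ `|t - tc| <= 1 / 5.

Definition lyap (p : nat) (f : V -> R) (xstar : V) (v x : V) (t : R) : R :=
  t ^+ 2 / (4 * p%:R ^+ 2) * enorm v ^+ 2
  + enorm (x + (t / (2 * p%:R)) *: v - xstar) ^+ 2
  + t ^+ p * (f x - f xstar).

End Defs.

From HB Require Import structures.
From mathcomp Require Import all_boot all_order all_algebra.
From mathcomp Require Import all_classical all_reals all_analysis.
From mathcomp Require Import ring lra zify.
Set Implicit Arguments. Unset Strict Implicit. Unset Printing Implicit Defensive.
Import Order.TTheory GRing.Theory Num.Theory.
Import numFieldNormedType.Exports.
Local Open Scope classical_set_scope.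
Local Open Scope ring_scope.

(* Write x = R u + x_c with |u| <= 1 and fix unit directions h_1, ..., h_i.
   Taylor's formula of order p - i for s |-> D^i f(s u + x_c)[h] on [0, R]
   bounds |D^i f(x)[h]| by sum_(l < p-i) |D^(l+i) f(x_c)| R^l + M R^(p-i),
   the remainder being controlled by (ii).  Since t_c^p (f(x_c) - min f)
   <= E(y_c), hypothesis (i) and a^e <= 1 + a for e in [0, 1] bound each
   coefficient term by (1 + L E(y_c)) / t_c^(p-i).
   The analytic input is that a function with continuous partial derivatives
   has directional derivatives that are linear in the direction, so that up to
   order s + 1 the directional derivatives of f are finite combinations of its
   continuous partial derivatives: this makes them differentiable along the
   segment and bounded on unit directions, so that [dnorm] is a true bound. *)

Local Notation unit_dirs hs := (all (fun h => enorm h <= 1) hs).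

Section RealLine.
Variable R : realType.

Lemma MVT_derivable_segment (phi : R -> R) (lo hi : R) : lo <= hi ->
  (forall t, lo <= t <= hi -> derivable phi t 1) ->
  exists2 xi, lo <= xi <= hi & phi hi - phi lo = 'D_1 phi xi * (hi - lo).
Proof.
move=> lohi dphi.
have dphi' x : x \in `]lo, hi[ -> is_derive x 1 phi ('D_1 phi x).
  by move=> xin; apply/derivableP/dphi; rewrite !ltW ?(itvP xin).
have cphi : {within `[lo, hi], continuous phi}.
  by apply: derivable_within_continuous => x xin; apply: dphi; rewrite ?(itvP xin).
have [xi xiin ->] := MVT_segment lohi dphi' cphi.
by exists xi; rewrite ?(itvP xiin).
Qed.

Lemma mean_value_le (phi : R -> R) (c a K : R) :
  (forall t, `|t| <= `|c| -> derivable phi t 1) ->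
  (forall t, `|t| <= `|c| -> `|'D_1 phi t - a| <= K) ->
  `|phi c - phi 0 - a * c| <= K * `|c|.
Proof.
move=> dphi Dphi.
have incr lo hi : lo <= hi -> (forall t, lo <= t <= hi -> `|t| <= `|c|) ->
    `|phi hi - phi lo - a * (hi - lo)| <= K * (hi - lo).
  move=> lohi inc.
  have [xi /inc xic ->] := MVT_derivable_segment lohi (fun t ht => dphi t (inc t ht)).
  rewrite -mulrBl normrM [`|hi - lo|]ger0_norm ?subr_ge0 //.
  by apply: ler_wpM2r; rewrite ?subr_ge0 // Dphi.
have [c0|c0] := leP 0 c.
  rewrite [`|c|]ger0_norm //; have := incr 0 c c0; rewrite !subr0; apply=> t /andP[t0 tc].
  by rewrite !ger0_norm // (le_trans t0 tc).
rewrite [`|c|]ltr0_norm // -normrN -[- c]sub0r.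
have -> : - (phi c - phi 0 - a * c) = phi 0 - phi c - a * (0 - c) by ring.
apply: incr; first exact: ltW.
by move=> t /andP[ct t0]; rewrite !ler0_norm ?lerN2 // ltW.
Qed.

Lemma taylor_le (K r : R) (m : nat) (phi : nat -> R -> R) :
  (forall j (t : R), (j < m)%N -> `|t| <= r -> is_derive t 1 (phi j) (phi j.+1 t)) ->
  (forall t, `|t| <= r -> `|phi m t| <= K) ->
  forall t, `|t| <= r ->
  `|phi 0%N t| <= \sum_(l < m) `|phi l 0| * `|t| ^+ l + K * `|t| ^+ m.
Proof.
elim: m phi => [|m IH] phi dphi phim t tr.
  by rewrite big_ord0 add0r expr0 mulr1; exact: phim.
have K0 : 0 <= K := le_trans (normr_ge0 _) (phim t tr).
pose B := \sum_(l < m) `|phi l.+1 0| * `|t| ^+ l + K * `|t| ^+ m.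
have phi1_le s : `|s| <= `|t| -> `|phi 1%N s| <= B.
  move=> st; have sr := le_trans st tr.
  apply: le_trans (IH (fun j => phi j.+1) (fun j => dphi j.+1) phim s sr) _.
  apply: lerD; last by rewrite ler_wpM2l // lerXn2r.
  by apply: ler_sum => l _; rewrite ler_wpM2l // lerXn2r.
have dphi0 (s : R) : `|s| <= `|t| -> is_derive s 1 (phi 0%N) (phi 1%N s).
  by move=> st; apply: dphi => //; apply: le_trans tr.
have Dphi0_le (s : R) : `|s| <= `|t| -> `|'D_1 (phi 0%N) s - 0| <= B.
  by move=> st; rewrite subr0 (derive_val (is_derive := dphi0 s st)) phi1_le.
have := mean_value_le (fun s st => ex_derive (is_derive := dphi0 s st)) Dphi0_le.
rewrite mul0r subr0 => incr.
rewrite -[phi 0%N t](subrK (phi 0%N 0)); apply: le_trans (ler_normD _ _) _.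
rewrite big_ord_recl /= expr0 mulr1 addrC -addrA lerD2l.
suff -> : \sum_(l < m) `|phi (bump 0 l) 0| * `|t| ^+ bump 0 l + K * `|t| ^+ m.+1 = B * `|t|.
  exact: incr.
rewrite /B mulrDl big_distrl /= exprSr mulrA; congr (_ + _).
by apply: eq_bigr => l _; rewrite /bump /= add1n exprSr mulrA.
Qed.
End RealLine.

Section Lines.
Variables (R : realType) (V : normedModType R).

Lemma is_derive_line (W : normedModType R) (g : V -> W) (y v : V) (t : R) :
  derivable g (t *: v + y) v ->
  is_derive t 1 (fun s : R => g (s *: v + y)) ('D_v g (t *: v + y)).
Proof.
set gl := fun s : R => g (s *: v + y).
have quotE : (fun h : R => h^-1 *: ((gl \o shift t) (h *: 1) - gl t)) =
    (fun h : R => h^-1 *: ((g \o shift (t *: v + y)) (h *: v) - g (t *: v + y))).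
  by apply: funext => h; rewrite /gl /shift /= [h *: 1]mulr1 scalerDl addrA.
by move=> dg; split; rewrite /derivable /derive quotE.
Qed.

Lemma line_increment_le (g : V -> R) (z v : V) (c a K : R) :
  (forall s, `|s| <= `|c| -> derivable g (s *: v + z) v) ->
  (forall s, `|s| <= `|c| -> `|'D_v g (s *: v + z) - a| <= K) ->
  `|g (c *: v + z) - g z - a * c| <= K * `|c|.
Proof.
move=> dg Dg; have := @mean_value_le R (fun s => g (s *: v + z)) c a K.
rewrite scale0r add0r; apply=> s sc; have gl := is_derive_line (dg s sc).
  exact: ex_derive.
by rewrite derive_val; apply: Dg.
Qed.

Lemma is_derive_sum_seq (W : normedModType R) (I : eqType) (r : seq I)
    (F : I -> V -> W) (x v : V) (dF : I -> W) :
  (forall i, i \in r -> is_derive x v (F i) (dF i)) ->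
  is_derive x v (fun y => \sum_(i <- r) F i y) (\sum_(i <- r) dF i).
Proof.
elim: r => [|a r IH] dF_r.
  have -> : (fun y => \sum_(i <- [::]) F i y) = cst 0 by apply: funext => y; rewrite big_nil.
  by rewrite big_nil; exact: is_derive_cst.
have -> : (fun y => \sum_(i <- a :: r) F i y) = F a + (fun y => \sum_(i <- r) F i y).
  by apply: funext => y; rewrite big_cons.
rewrite big_cons; apply: is_deriveD; first by apply: dF_r; rewrite mem_head.
by apply: IH => i ir; apply: dF_r; rewrite in_cons ir orbT.
Qed.
End Lines.

Section Coordinates.
Variables (R : realType) (d : nat).
Local Notation V := 'rV[R]_d.

Lemma mx_norm_le (w : V) (c : R) : 0 <= c -> (forall j, `|w 0 j| <= c) -> `|w| <= c.
Proof.
move=> c0 wc; have -> : `|w| = mx_norm w by [].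
rewrite mx_normrE; apply: bigmax_le => //= -[i j] _.
by rewrite (ord1 i).
Qed.

Lemma ler_coord_enorm (h : V) (j : 'I_d) : `|h 0 j| <= enorm h.
Proof.
rewrite /enorm /edot -sqrtr_sqr; apply: ler_wsqrtr.
rewrite (bigD1 j) //= -expr2 lerDl; apply: sumr_ge0 => i _; by rewrite -expr2 sqr_ge0.
Qed.

Lemma enormZ (c : R) (w : V) : enorm (c *: w) = `|c| * enorm w.
Proof.
rewrite /enorm /edot -sqrtr_sqr -sqrtrM ?sqr_ge0 // big_distrr /=; congr Num.sqrt.
by apply: eq_bigr => i _; rewrite !mxE mulrACA.
Qed.

Lemma enorm0 : enorm (0 : V) = 0.
Proof. by rewrite -(scale0r 0) enormZ normr0 mul0r. Qed.

Definition row_trunc (k : nat) (h : V) : V := \row_i (if (i < k)%N then h 0 i else 0).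

Lemma row_trunc0 (h : V) : row_trunc 0 h = 0.
Proof. by apply/rowP => i; rewrite !mxE. Qed.

Lemma row_trunc_full (h : V) : row_trunc d h = h.
Proof. by apply/rowP => i; rewrite !mxE ltn_ord. Qed.

Lemma row_truncS (h : V) (j : 'I_d) :
  row_trunc j.+1 h = h 0 j *: ebasis R j + row_trunc j h.
Proof.
apply/rowP => i; rewrite !mxE ltnS leq_eqVlt eqxx /=.
case: (eqVneq i j) => [->|nij]; first by rewrite eqxx ltnn mulr1 addr0.
by rewrite val_eqE (negPf nij) mulr0 add0r.
Qed.

Lemma norm_partial_path (h : V) (j : 'I_d) (t s : R) :
  `|s| <= `|t * h 0 j| -> `|s *: ebasis R j + t *: row_trunc j h| <= `|t| * `|h|.
Proof.
move=> st; apply: mx_norm_le => // i.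
have hkh k : `|h 0 k| <= `|h|.
  by have -> : `|h| = mx_norm h by []; rewrite mx_normrE; exact: (le_bigmax _ _ (0, k)).
rewrite !mxE; case: (eqVneq i j) => [->|/negPf nij].
  by rewrite ltnn eqxx mulr0 addr0 mulr1; apply: le_trans st _; rewrite normrM ler_wpM2l.
rewrite mulr0 add0r; case: ifP => _; last by rewrite mulr0 normr0 mulr_ge0.
by rewrite normrM ler_wpM2l.
Qed.
End Coordinates.

Section Partials.
Variables (R : realType) (d : nat).
Local Notation V := 'rV[R]_d.

Lemma partial_quotient_le (g : V -> R) (x h : V) (t del e : R) :
  t != 0 -> `|t| * `|h| < del ->
  (forall y, ball x del y -> forall j,
    derivable g y (ebasis R j) /\ `|'D_(ebasis R j) g x - 'D_(ebasis R j) g y| <= e) ->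
  `|\sum_(j < d) h 0 j * 'D_(ebasis R j) g x - t^-1 *: (g (t *: h + x) - g x)|
    <= e * \sum_(j < d) `|h 0 j|.
Proof.
move=> t0 tsmall near_x.
(* Walk from x to t h + x changing one coordinate at a time; each step is a
   mean-value estimate for a single partial derivative. *)
pose z k := t *: row_trunc k h + x.
have incr_le (j : 'I_d) :
    `|g (z j.+1) - g (z j) - 'D_(ebasis R j) g x * (t * h 0 j)| <= e * `|t * h 0 j|.
  have on_path s : `|s| <= `|t * h 0 j| -> ball x del (s *: ebasis R j + z j).
    move=> st; rewrite -ball_normE /ball_ /= /z addrA opprD addrCA subrr addr0 normrN.
    exact: le_lt_trans (norm_partial_path st) tsmall.
  rewrite /z row_truncS scalerDr scalerA -[X in g X]addrA.
  apply: line_increment_le => s st; have [] := near_x _ (on_path s st) j => //.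
  by rewrite distrC.
have telescope : g (t *: h + x) - g x = \sum_(j < d) (g (z j.+1) - g (z j)).
  rewrite -(big_mkord xpredT (fun k => g (z k.+1) - g (z k))) telescope_sumr //.
  by rewrite /z row_trunc_full row_trunc0 scaler0 add0r.
rewrite telescope.
have -> : \sum_(j < d) h 0 j * 'D_(ebasis R j) g x
      - t^-1 *: \sum_(j < d) (g (z j.+1) - g (z j)) =
    - (t^-1 * \sum_(j < d) (g (z j.+1) - g (z j) - 'D_(ebasis R j) g x * (t * h 0 j))).
  rewrite [X in _ = - (_ * X)]sumrB mulrBr opprB big_distrr /=; congr (_ - _).
  by apply: eq_bigr => j _; rewrite mulrCA mulKf // mulrC.
rewrite normrN normrM normfV ler_pdivrMl ?normr_gt0 //.
apply: le_trans (ler_norm_sum _ _ _) _; apply: le_trans (ler_sum _ (fun j _ => incr_le j)) _.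
by rewrite -big_distrr /= (eq_bigr _ (fun j _ => normrM _ _)) -big_distrr /= mulrCA.
Qed.

Lemma is_derive_partials (g : V -> R) (x h : V) :
  (\forall y \near x, forall j, derivable g y (ebasis R j)) ->
  (forall j, {for x, continuous (fun y => 'D_(ebasis R j) g y)}) ->
  is_derive x h g (\sum_(j < d) h 0 j * 'D_(ebasis R j) g x).
Proof.
move=> dg cg; set S := \sum_(j < d) _.
suff quot : (fun t : R => t^-1 *: ((g \o shift x) (t *: h) - g x)) @ 0^' --> S.
  by split; [apply/cvg_ex; exists S | apply: cvg_lim].
apply/cvgrPdist_le => eps eps0.
have h1_gt0 : 0 < \sum_(j < d) `|h 0 j| + 1 by rewrite ltr_pwDr // sumr_ge0.
pose e := eps / (\sum_(j < d) `|h 0 j| + 1).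
have e0 : 0 < e by rewrite divr_gt0.
have /nbhs_ballP[del del0 near_x] : \forall y \near x, forall j,
    derivable g y (ebasis R j) /\ `|'D_(ebasis R j) g x - 'D_(ebasis R j) g y| <= e.
  have cgx : \forall y \near x, forall j, `|'D_(ebasis R j) g x - 'D_(ebasis R j) g y| <= e.
    apply: (@filter_forall _ _ _ (nbhs x) _) => j.
    by move/cvgrPdist_le : (cg j); apply.
  by apply: filterS2 dg cgx => y dgy cgy j; split; [exact: dgy|exact: cgy].
near=> t.
have t0 : t != 0 by near: t; exact: nbhs_dnbhs_neq.
have tsmall : `|t| * `|h| < del.
  have : `|t| < del / (`|h| + 1) by near: t; apply: dnbhs0_lt; rewrite divr_gt0 // ltr_wpDl.
  rewrite ltr_pdivlMr ?ltr_wpDl // mulrDr mulr1 => /(le_lt_trans _); apply.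
  by rewrite lerDl.
apply: le_trans (partial_quotient_le t0 tsmall near_x) _.
by rewrite /e mulrAC ler_pdivrMr // ler_wpM2l ?(ltW eps0) ?lerDl.
Unshelve. all: by end_near.
Qed.
End Partials.

Section DerivativeNorms.
Variables (R : realType) (d : nat).
Local Notation V := 'rV[R]_d.

(* [sup] of a set that is not bounded above is a junk value, hence the
   boundedness hypothesis. *)
Lemma dnorm_ge (g : V -> R) (n : nat) (y : V) (hs : seq V) :
  (exists B, forall hs', size hs' = n -> unit_dirs hs' -> `|dirD hs' g y| <= B) ->
  size hs = n -> unit_dirs hs -> `|dirD hs g y| <= dnorm n g y.
Proof.
move=> [B hB] sz hs1; apply: ub_le_sup; last by exists hs.
by exists B => _ [hs' [? ? ->]]; exact: hB.
Qed.

Lemma dnorm_le (g : V -> R) (n : nat) (y : V) (C : R) :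
  (forall hs, size hs = n -> unit_dirs hs -> `|dirD hs g y| <= C) -> dnorm n g y <= C.
Proof.
move=> hC; apply: ge_sup => [|_ [hs [? ? ->]]]; last exact: hC.
exists `|dirD (nseq n 0) g y|, (nseq n 0); split => //; first by rewrite size_nseq.
by rewrite all_nseq enorm0 ler01 orbT.
Qed.
End DerivativeNorms.

Section PartialExpansion.
Variables (R : realType) (d : nat) (f : 'rV[R]_d -> R) (U : set 'rV[R]_d) (k : nat).
Local Notation V := 'rV[R]_d.
Hypothesis fCk : Ck_on k f U.

Definition pdiff (w : seq 'I_d) : V -> R := dirD (map (@ebasis R d) w) f.

Fixpoint multi_indices (n : nat) : seq (seq 'I_d) :=
  if n is n'.+1 then [seq j :: w | j <- index_enum 'I_d, w <- multi_indices n']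
  else [:: [::]].

Fixpoint dir_coef (hs : seq V) (w : seq 'I_d) : R :=
  if hs is h :: hs' then if w is j :: w' then h 0 j * dir_coef hs' w' else 1 else 1.

Definition partial_expansion (hs : seq V) : V -> R :=
  fun y => \sum_(w <- multi_indices (size hs)) dir_coef hs w * pdiff w y.

Lemma size_multi_indices n w : w \in multi_indices n -> size w = n.
Proof.
elim: n w => [|n IH] w /=; first by rewrite inE => /eqP ->.
by case/allpairsP => -[j w'] [_ /IH <- ->].
Qed.

Lemma dir_coef_le1 (hs : seq V) (w : seq 'I_d) :
  unit_dirs hs -> `|dir_coef hs w| <= 1.
Proof.
elim: hs w => [|h hs IH] [|j w] /=; rewrite ?normr1 // => /andP[h1 hs1].
by rewrite normrM -[1]mulr1 ler_pM ?IH // (le_trans (ler_coord_enorm h j) h1).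
Qed.

Lemma Ck_on_nbhs y : U y -> nbhs y U.
Proof. by case: fCk; rewrite openE => + _ Uy => /(_ y Uy). Qed.

Lemma is_derive_pdiff (w : seq 'I_d) (y v : V) : (size w < k)%N -> U y ->
  is_derive y v (pdiff w) (\sum_(j < d) v 0 j * pdiff (j :: w) y).
Proof.
case: fCk => _ [dCk cCk] wk Uy; apply: is_derive_partials => [|j].
  by apply: filterS (Ck_on_nbhs Uy) => z Uz j; apply: dCk; rewrite ?size_map.
by apply: (cCk (j :: w)) => //; rewrite size_map.
Qed.

Lemma is_derive_partial_expansion (hs : seq V) (y v : V) : (size hs < k)%N -> U y ->
  is_derive y v (partial_expansion hs)
    (\sum_(w <- multi_indices (size hs))
       dir_coef hs w * \sum_(j < d) v 0 j * pdiff (j :: w) y).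
Proof.
move=> hsk Uy; apply: is_derive_sum_seq => w /size_multi_indices wn.
by apply: is_deriveZ; apply: is_derive_pdiff; rewrite ?wn.
Qed.

Lemma dirD_partial_expansion (hs : seq V) (y : V) : (size hs <= k)%N -> U y ->
  dirD hs f y = partial_expansion hs y.
Proof.
elim: hs y => [|h hs IH] y hsk Uy; first by rewrite /partial_expansion big_seq1 mul1r.
have near_eq : \near y, dirD hs f y = partial_expansion hs y.
  by apply: filterS (Ck_on_nbhs Uy) => z; apply: IH; apply: ltnW.
have Dexp := is_derive_partial_expansion h hsk Uy.
rewrite /= (near_eq_derive _ near_eq) (derive_val (is_derive := Dexp)).
rewrite /partial_expansion /= big_allpairs_dep.
rewrite (exchange_big _ _ _ xpredT xpredT) /=; apply: eq_bigr => w _.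
by rewrite big_distrr; apply: eq_bigr => j _; rewrite /= mulrCA mulrA.
Qed.

Lemma derivable_dirD (hs : seq V) (y v : V) : (size hs < k)%N -> U y ->
  derivable (dirD hs f) y v.
Proof.
move=> hsk Uy; apply: (@near_eq_derivable _ _ _ (partial_expansion hs)).
  apply: filterS (Ck_on_nbhs Uy) => z Uz; exact/esym/dirD_partial_expansion/Uz/ltnW.
exact: (ex_derive (is_derive := is_derive_partial_expansion v hsk Uy)).
Qed.

Lemma dirD_bounded (n : nat) (y : V) : (n <= k)%N -> U y ->
  exists B, forall hs, size hs = n -> unit_dirs hs -> `|dirD hs f y| <= B.
Proof.
move=> nk Uy; exists (\sum_(w <- multi_indices n) `|pdiff w y|) => hs hsn hs1.
rewrite dirD_partial_expansion ?hsn // /partial_expansion hsn.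
apply: le_trans (ler_norm_sum _ _ _) (ler_sum _ _) => w _.
by rewrite normrM -[X in _ <= X]mul1r ler_wpM2r // dir_coef_le1.
Qed.

Lemma ler_dirD_dnorm (hs : seq V) (y : V) : (size hs <= k)%N -> U y ->
  unit_dirs hs -> `|dirD hs f y| <= dnorm (size hs) f y.
Proof. by move=> hsk Uy; apply: dnorm_ge => //; exact: dirD_bounded. Qed.
End PartialExpansion.

Section TaylorDnorm.
Variables (R : realType) (d : nat).
Local Notation V := 'rV[R]_d.

Lemma cball_e_segment (xc u : V) (r s : R) :
  enorm u <= 1 -> `|s| <= r -> cball_e xc r (s *: u + xc).
Proof.
move=> u1 sr; rewrite /cball_e /= addrK enormZ; apply: le_trans _ sr.
by rewrite -[X in _ <= X]mulr1 ler_wpM2l.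
Qed.

Lemma dnorm_taylor_le (f : V -> R) (U : set V) (k i m : nat) (xc u : V) (r K : R) :
  Ck_on k f U -> cball_e xc r `<=` U -> 0 <= r -> enorm u <= 1 -> (m + i <= k)%N ->
  (forall y, cball_e xc r y -> dnorm (m + i) f y <= K) ->
  dnorm i f (r *: u + xc) <= \sum_(l < m) dnorm (l + i) f xc * r ^+ l + K * r ^+ m.
Proof.
move=> fCk ballU r0 u1 mik dK; apply: dnorm_le => hs hsi hs1.
have onU s : `|s| <= r -> U (s *: u + xc) by move=> sr; apply/ballU/cball_e_segment.
pose phi j s := dirD (nseq j u ++ hs) f (s *: u + xc).
have size_dirs j : size (nseq j u ++ hs) = (j + i)%N by rewrite size_cat size_nseq hsi.
have dirs1 j : unit_dirs (nseq j u ++ hs).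
  by rewrite all_cat all_nseq u1 orbT hs1.
have dphi j (s : R) : (j < m)%N -> `|s| <= r -> is_derive s 1 (phi j) (phi j.+1 s).
  move=> jm sr; apply: (is_derive_line (g := dirD (nseq j u ++ hs) f)).
  apply: (@derivable_dirD _ _ _ _ _ fCk (nseq j u ++ hs)); last exact: onU.
  by rewrite size_dirs; apply: leq_trans mik; rewrite ltn_add2r.
have phim_le s : `|s| <= r -> `|phi m s| <= K.
  move=> sr; apply: le_trans (dK _ (cball_e_segment xc u1 sr)).
  rewrite -size_dirs; apply: (@ler_dirD_dnorm _ _ _ _ _ fCk _ _ _ _ (dirs1 m)).
    by rewrite size_dirs.
  exact: onU.
have r_le : `|r| <= r by rewrite ger0_norm.
apply: le_trans (taylor_le dphi phim_le r_le) _; rewrite ger0_norm // lerD2r.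
apply: ler_sum => l _; rewrite ler_wpM2r ?exprn_ge0 //.
rewrite /phi scale0r add0r -size_dirs.
apply: (@ler_dirD_dnorm _ _ _ _ _ fCk _ _ _ _ (dirs1 l)).
  by rewrite size_dirs (leq_trans _ mik) // leq_add2r ltnW.
by rewrite -[xc]add0r -(scale0r u); apply: onU; rewrite normr0.
Qed.
End TaylorDnorm.

Section Estimates.
Variable R : realType.

Lemma powR_le1D (A e : R) : 0 <= A -> 0 <= e <= 1 -> A `^ e <= 1 + A.
Proof.
move=> A0 /andP[e0 e1]; have [A1|A1] := leP A 1.
  apply: (@le_trans _ _ 1); last by rewrite lerDl.
  have [->|An0] := eqVneq A 0.
    by have [->|en0] := eqVneq e 0; rewrite ?powRr0 ?powR0 ?ler01.
  have Ap : 0 < A <= 1 by rewrite lt_neqAle eq_sym An0 A0.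
  by have := ger_powR Ap e0; rewrite powRr0.
apply: (@le_trans _ _ A); last by rewrite lerDr.
by apply: ler1_powR => //; exact: ltW.
Qed.

Lemma taylor_coef_le (tc L g E : R) (p i l : nat) :
  0 < tc -> 0 <= L -> 0 <= g -> tc ^+ p * g <= E -> (l + i < p)%N ->
  (L * g) `^ ((p%:R - (l + i)%:R) / p%:R) * (1 / tc) ^+ l <= (1 + L * E) / tc ^+ (p - i).
Proof.
move=> tc0 L0 g0 gE lip.
set e := (p%:R - (l + i)%:R) / p%:R.
have p0 : (0 < p)%N by apply: leq_ltn_trans lip.
have e01 : 0 <= e <= 1.
  rewrite divr_ge0 ?subr_ge0 ?ler_nat 1?ltnW //=.
  by rewrite ler_pdivrMr ?ltr0n // mul1r lerBlDr lerDl.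
have tcpe : (tc ^+ p) `^ e = tc ^+ (p - i - l).
  rewrite -powR_mulrn ?(ltW tc0) // -powRrM /e mulrC divfK ?pnatr_eq0 -?lt0n //.
  by rewrite -natrB 1?ltnW // powR_mulrn ?(ltW tc0) // subnDA subnAC.
(* With e = (p - l - i) / p: (L g)^e tc^(p-i-l) = (L g tc^p)^e <= 1 + L g tc^p. *)
have key : (L * g) `^ e * tc ^+ (p - i - l) <= 1 + L * E.
  have tcp0 : 0 <= tc ^+ p by rewrite exprn_ge0 // ltW.
  rewrite -tcpe -powRM ?mulr_ge0 //.
  apply: le_trans (powR_le1D _ e01) _; first by rewrite !mulr_ge0.
  by rewrite lerD2l -mulrA ler_wpM2l // mulrC.
have -> : (1 + L * E) / tc ^+ (p - i) = (1 + L * E) / tc ^+ (p - i - l) * (1 / tc) ^+ l.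
  have -> : tc ^+ (p - i) = tc ^+ (p - i - l) * tc ^+ l by rewrite -exprD subnK //; lia.
  by rewrite expr_div_n expr1n; field; rewrite !expf_neq0 // gt_eqF.
apply: ler_wpM2r; first by rewrite exprn_ge0 // divr_ge0 // ltW.
by rewrite ler_pdivlMr ?exprn_gt0.
Qed.

Lemma taylor_sum_le (M L E tc : R) (p m : nat) :
  0 <= M -> 0 <= L -> 0 <= E -> 0 < tc -> (m <= p)%N -> (0 < p)%N ->
  m%:R * ((1 + L * E) / tc ^+ m) + M * (1 / tc) ^+ m <= p%:R * (M + L + 1) * (E + 1) / tc ^+ m.
Proof.
move=> M0 L0 E0 tc0 mp p0.
rewrite expr_div_n expr1n mulrA [M * _]mulrA mulr1 -mulrDl; apply: ler_wpM2r.
  by rewrite invr_ge0 exprn_ge0 // ltW.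
have mp' : (m%:R : R) <= p%:R by rewrite ler_nat.
have p1 : (1 : R) <= p%:R by rewrite ler1n.
have LE0 : 0 <= L * E by rewrite mulr_ge0.
have ME0 : 0 <= M * E by rewrite mulr_ge0.
nra.
Qed.

Lemma lyap_ge_gap (d p : nat) (f : 'rV[R]_d -> R) (xstar v x : 'rV[R]_d) (t : R) :
  t ^+ p * (f x - f xstar) <= lyap p f xstar v x t.
Proof.
rewrite /lyap lerDr addr_ge0 ?sqr_ge0 // mulr_ge0 ?sqr_ge0 //.
by rewrite divr_ge0 ?sqr_ge0 // mulr_ge0 ?sqr_ge0.
Qed.
End Estimates.

Theorem mainTheorem1 (R : realType) (d p s : nat) (L M : R)
  (f : 'rV[R]_d -> R) (xstar : 'rV[R]_d)
  (vc xc : 'rV[R]_d) (tc : R) :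
  (1 <= d)%N -> (2 <= p)%N -> (p <= s)%N -> 0 < L -> 0 < M ->
  convex_fun f -> (forall x, f xstar <= f x) ->
  1 <= tc ->
  let Rad := 1 / tc in
  (exists U : set 'rV[R]_d, cball_e xc Rad `<=` U /\ Ck_on s.+1 f U) ->
  (forall x, cball_e xc Rad x -> forall i : nat, (1 <= i <= p.-1)%N ->
     dnorm i f x <= (L * (f x - f xstar)) `^ ((p%:R - i%:R) / p%:R)) ->
  (forall x, cball_e xc Rad x -> forall i : nat, (p <= i <= s.+1)%N ->
     dnorm i f x <= M) ->
  forall (v x : 'rV[R]_d) (t : R), Uset Rad vc xc tc v x t ->
  forall i : nat, (1 <= i <= p)%N ->
    dnorm i f x <= p%:R * (M + L + 1) * (lyap p f xstar vc xc tc + 1) / tc ^+ (p - i).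
Proof.
move=> _ p2 ps L0 M0 _ fmin tc1 Rad [U [ballU fCk]] dlow dhigh v x t [_ [xxc _]].
move=> i /andP[i1 ip].
have tc0 : 0 < tc by apply: lt_le_trans tc1.
have Rad0 : 0 <= Rad by rewrite divr_ge0 // ltW.
set u := tc *: (x - xc).
have u1 : enorm u <= 1.
  by rewrite enormZ gtr0_norm // -ler_pdivlMl // mulr1 -div1r.
have -> : x = Rad *: u + xc by rewrite /Rad scalerA div1r mulVf ?gt_eqF // scale1r subrK.
set E := lyap p f xstar vc xc tc.
have gap0 : 0 <= f xc - f xstar by rewrite subr_ge0.
have gapE : tc ^+ p * (f xc - f xstar) <= E := lyap_ge_gap p f xstar vc xc tc.
have E0 : 0 <= E by apply: le_trans gapE; rewrite mulr_ge0 // exprn_ge0 // ltW.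
have xc_ball : cball_e xc Rad xc by rewrite /cball_e /= subrr enorm0.
apply: le_trans (dnorm_taylor_le (m := p - i) (K := M) fCk ballU Rad0 u1 _ _) _.
- by rewrite subnK //; apply: leq_trans ps _.
- by move=> y y_ball; apply: dhigh => //; rewrite subnK // leqnn /= ltnW // ltnS.
have coef_le (l : 'I_(p - i)) : dnorm (l + i) f xc * Rad ^+ l <= (1 + L * E) / tc ^+ (p - i).
  have lip : (l + i < p)%N by have := ltn_ord l; lia.
  apply: le_trans (taylor_coef_le tc0 (ltW L0) gap0 gapE lip).
  by rewrite ler_wpM2r ?exprn_ge0 // dlow //; apply/andP; split; lia.
apply: le_trans (lerD (ler_sum _ (fun l _ => coef_le l)) (lexx _)) _.
rewrite sumr_const card_ord -[_ *+ (p - i)]mulr_natl /Rad.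
apply: taylor_sum_le (ltW M0) (ltW L0) E0 tc0 (leq_subr _ _) _; lia.
Qed.
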